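(* Let $r$ be a positive integer and $n\ge0$. Each of the following sets is a basis of $\mathrm{NCQSym}^r_n(\mathbf{x})$: (1) $\{\mathbf{M}_{(\Phi,\Pi)}:(\Phi,\Pi)\text{ an } r\text{-set-composition of }[n]\}$; (2) $\{\overline{\mathbf{F}}_{(\Phi,\Pi)}:(\Phi,\Pi)\text{ an } r\text{-set-composition of }[n]\}$.
   Context: Noncommuting variables $\mathbf{x}_1,\mathbf{x}_2,\dots$. A set composition $\Phi=(\Phi_1|\cdots|\Phi_k)$ of a finite set is an ordered list of disjoint nonempty blocks with that union; a set partition $\Pi=\Pi_1/\cdots/\Pi_l$ an unordered one. An $r$-set-composition of $[n]$ is a pair $(\Phi,\Pi)$ with $\Phi$ a set composition of some $A\subseteq[n]$ with all blocks of size $\ge r$ and $\Pi$ a set partition of $[n]\setminus A$ with all blocks of size $<r$. $\mathbf{M}_{(\Phi,\Pi)}=\sum\mathbf{x}_{i_1}\cdots\mathbf{x}_{i_n}$ over tuples with $i_j=i_k$ iff $j,k$ lie in a common block of $\Phi$ or $\Pi$, and $i_j<i_k$ whenever $j\in\Phi_l,k\in\Phi_m$, $l<m$; $\mathrm{NCQSym}^r_n(\mathbf{x})$ is the $\mathbb{Q}$-span of these $\mathbf{M}_{(\Phi,\Pi)}$. An edge-coloured digraph is a finite simple digraph with each edge of type dashed ($\dashrightarrow$), solid ($\rightarrow$) or double ($\Rightarrow$); a proper vertex-colouring is $\kappa:V\to\mathbb{P}$ with $\kappa(a)\ne\kappa(b)$, $\kappa(a)<\kappa(b)$, $\kappa(a)\le\kappa(b)$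 for dashed, solid, double edges $(a,b)$ respectively. A labelled edge-coloured digraph $(G,L)$ has a bijection $L:V(G)\to[|V(G)|]$ and $\mathscr{Y}_{(G,L)}(\mathbf{x})=\sum_\kappa\mathbf{x}_{\kappa(L^{-1}(1))}\mathbf{x}_{\kappa(L^{-1}(2))}\cdots\mathbf{x}_{\kappa(L^{-1}(|V(G)|))}$ over proper vertex-colourings $\kappa$. For a finite set $A\subseteq\mathbb{P}$, $C_A$ is a directed cycle on $|A|$ vertices with all edges double and vertices labelled bijectively by $A$ (a single vertex with no edges if $|A|=1$). The dashed (resp. double) sum of two labelled edge-coloured digraphs is their disjoint union together with a dashed (resp. double) edge $(a,b)$ for every vertex $a$ of the first and $b$ of the second. Define $\overline{\mathbf{F}}_{(\Phi,\Pi)}=\mathscr{Y}_{(G,L)}(\mathbf{x})$ where $(G,L)$ is the dashed sum of $\big(C_{\Phi_1}$ double-sum $C_{\Phi_2}$ double-sum $\cdots$ double-sum $C_{\Phi_k}\big)$ and $\big(C_{\Pi_1}$ dashed-sum $\cdots$ dashed-sum $C_{\Pi_l}\big)$. *)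

From mathcomp Require Import all_boot all_order all_algebra.
Set Implicit Arguments. Unset Strict Implicit. Unset Printing Implicit Defensive.
Import GRing.Theory.
Local Open Scope ring_scope.

Section NCQSym.
Variable n : nat.

(* Positions 1..n are represented by the ordinals 'I_n (position j+1 <-> j).
   A monomial x_{i_1} ... x_{i_n} is represented by the word w : 'I_n -> nat
   (w j = i_{j+1}); only words with positive letters occur.  A homogeneous
   noncommutative formal power series of degree n over Q is the function
   giving the coefficient of each monomial. *)
Definition word := 'I_n -> nat.
Definition ser := word -> rat.

Definition rsc_t := (seq {set 'I_n} * {set {set 'I_n}})%type.

Definition covered (Phi : seq {set 'I_n}) : {set 'I_n} := \bigcup_(B <- Phi) B.

Definition is_rsc (r : nat) (x : rsc_t) : bool :=
  let Phi := x.1 in let Pi := x.2 in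
  [&& all (fun B : {set 'I_n} => B != set0) Phi,
      pairwise (fun B C : {set 'I_n} => [disjoint B & C]) Phi,
      all (fun B : {set 'I_n} => r <= #|B|)%N Phi,
      partition Pi (~: covered Phi) &
      [forall B in Pi, #|B| < r]%N].

Definition sameblock (x : rsc_t) (j k : 'I_n) : bool :=
  has (fun B : {set 'I_n} => (j \in B) && (k \in B)) (x.1 ++ enum x.2).

Definition Mcoef (x : rsc_t) (w : word) : bool :=
  [&& [forall j, 0 < w j]%N,
      [forall j, forall k, (w j == w k) == sameblock x j k] &
      [forall l : 'I_(size x.1), forall m : 'I_(size x.1),
         (l < m)%N ==> [forall j in nth set0 x.1 l, forall k in nth set0 x.1 m,
                          (w j < w k)%N]]].

Definition M (x : rsc_t) : ser := fun w => if Mcoef x w then 1 else 0.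

(* Labelled edge-coloured digraphs whose vertices are labels in [n];
   edge a b = Some c means there is an edge (a,b) of colour c. *)
Inductive ecol := Dashed | Solid | Double.

Record lgraph := LGraph { verts : {set 'I_n}; edge : 'I_n -> 'I_n -> option ecol }.

Definition lempty : lgraph := LGraph set0 (fun _ _ => None).

Definition Ccyc (A : {set 'I_n}) : lgraph :=
  LGraph A (fun a b => if [&& a \in A, b \in A, a != b & next (enum A) a == b]
                       then Some Double else None).

(* c-sum of two graphs on disjoint vertex sets *)
Definition lsum (c : ecol) (G1 G2 : lgraph) : lgraph :=
  LGraph (verts G1 :|: verts G2)
    (fun a b => if (a \in verts G1) && (b \in verts G2) then Some c
                else match edge G1 a b with Some e => Some e | None => edge G2 a b end).

Definition edge_ok (e : option ecol) (ka kb : nat) : bool :=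
  match e with
  | Some Dashed => ka != kb
  | Some Solid => (ka < kb)%N
  | Some Double => (ka <= kb)%N
  | None => true
  end.

(* Y_(G,L) for a graph whose vertex set is all of [n], labelled by L = id:
   the coefficient of x_{w 1}...x_{w n} is the number of proper colourings
   kappa with kappa(L^{-1} j) = w j, i.e. 1 iff kappa := w is proper. *)
Definition proper (G : lgraph) (kappa : word) : bool :=
  [forall a, 0 < kappa a]%N &&
  [forall a, forall b, ((a \in verts G) && (b \in verts G)) ==>
                        edge_ok (edge G a b) (kappa a) (kappa b)].

Definition Y (G : lgraph) : ser := fun w => if proper G w then 1 else 0.

Definition Fgraph (x : rsc_t) : lgraph :=
  lsum Dashed (foldr (lsum Double) lempty [seq Ccyc B | B <- x.1])
              (foldr (lsum Dashed) lempty [seq Ccyc B | B <- enum x.2]).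

Definition Fbar (x : rsc_t) : ser := Y (Fgraph x).

Definition lincomb (f : rsc_t -> ser) (s : seq rsc_t) (c : rsc_t -> rat) : ser :=
  fun w => \sum_(y <- s) c y * f y w.

Definition NCQSym (r : nat) (g : ser) : Prop :=
  exists s c, all (is_rsc r) s /\ forall w, g w = lincomb M s c w.

Definition is_basis (V : ser -> Prop) (S : pred rsc_t) (f : rsc_t -> ser) : Prop :=
  [/\ (forall x, S x -> V (f x)),
      (forall g, V g -> exists s c, all S s /\ forall w, g w = lincomb f s c w) &
      (forall s c, uniq s -> all S s -> (forall w, lincomb f s c w = 0) ->
                   forall x, x \in s -> c x = 0)].

End NCQSym.

From Pilot Require Import Defs.
From mathcomp Require Import all_boot all_order all_algebra zify.
Set Implicit Arguments. Unset Strict Implicit. Unset Printing Implicit Defensive.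
Import GRing.Theory.

(** A word with positive letters lies in the support of exactly one [M (Phi, Pi)]: the
    blocks are its level sets, those of size at least [r] ordered by their letter.  So the
    [M]'s form a basis.  A word [w] lies in the support of [Fbar x] iff it is constant on
    the blocks of [x], weakly increasing along [Phi], and gives each block of [Pi] a letter
    used nowhere else.  This depends only on the [M]-class of [w], so
    [Fbar x = \sum_y Fbar x (w_y) * M y] for any word [w_y] of class [y].  Moreover
    [Fbar x (w_x) = 1], and [Fbar x (w_y) <> 0] with [y <> x] forces the blocks of [y] to
    be unions of blocks of [x], strictly fewer of them.  The transition matrix is thus
    unitriangular for the number of pairs lying in a common block, and the [Fbar]'s form a
    basis as well. *)

Lemma disjoint_memP (T : finType) (A B : {set T}) :
  reflect (forall j, j \in A -> j \in B -> False) [disjoint A & B].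
Proof.
apply: (iffP idP) => [AB j jA jB | AB]; first by rewrite (disjointFr AB jA) in jB.
by rewrite -setI_eq0; apply/eqP/setP => j; rewrite !inE; apply/negP => /andP[/AB].
Qed.

Lemma pairwise_sym_mem (T : eqType) (R : rel T) (s : seq T) a b :
  symmetric R -> pairwise R s -> a \in s -> b \in s -> a != b -> R a b.
Proof.
move=> R_sym Rs sa sb; have : pairwise (fun a b => (a == b) || R a b) s.
  by apply: sub_pairwise Rs => u v ->; rewrite orbT.
rewrite pairwise_all2rel => [/allrelP/(_ a b sa sb)/orP[->//|//]|u|u v].
- by rewrite eqxx.
- by rewrite eq_sym R_sym.
Qed.

Lemma cycle_next_leq_const (T : eqType) (s : seq T) (f : T -> nat) :
  uniq s -> {in s, forall a, f a <= f (next s a)} -> {in s &, forall a b, f a = f b}.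
Proof.
move=> s_uniq f_next a b sa sb.
have : cycle (relpre f leq) s.
  apply: (sub_in_cycle (P := mem s)) (cycle_next s_uniq); last exact/allP.
  by move=> u v su _ /eqP <-; apply: f_next.
rewrite cycle_all2rel => [/allrelP le_f|u v t]; last exact: leq_trans.
by apply/eqP; rewrite eqn_leq; apply/andP; split; apply: le_f.
Qed.

Lemma mem_covered n (L : seq {set 'I_n}) j :
  (j \in covered L) = has (fun B : {set 'I_n} => j \in B) L.
Proof.
elim: L => [|B L IH]; first by rewrite /covered big_nil inE.
by rewrite /covered big_cons inE -/(covered L) IH.
Qed.

Section Colourings.
Variable n : nat.
Implicit Types (G : lgraph n) (w : word n) (A B C : {set 'I_n}) (c : ecol).

Definition proper_on G w : Prop :=
  {in verts G &, forall a b, edge_ok (edge G a b) (w a) (w b)}.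

Definition edges_in G : Prop :=
  forall a b e, edge G a b = Some e -> (a \in verts G) && (b \in verts G).

Definition constant_on w B : bool := [forall a in B, forall b in B, w a == w b].

Definition cross_ok c w B C : bool :=
  [forall a in B, forall b in C, edge_ok (Some c) (w a) (w b)].

Definition cycle_sum c (L : seq {set 'I_n}) : lgraph n :=
  foldr (lsum c) (lempty n) [seq Ccyc B | B <- L].

Lemma constant_on_eq w w' B : (forall a b, (w a == w b) = (w' a == w' b)) ->
  constant_on w B = constant_on w' B.
Proof.
by move=> ww'; apply: eq_forallb => a; congr (_ ==> _); apply: eq_forallb => b; rewrite ww'.
Qed.

Lemma cross_ok_Dashed_eq w w' B C : (forall a b, (w a == w b) = (w' a == w' b)) ->
  cross_ok Dashed w B C = cross_ok Dashed w' B C.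
Proof.
by move=> ww'; apply: eq_forallb => a; congr (_ ==> _); apply: eq_forallb => b; rewrite /= ww'.
Qed.

Lemma proper_graphE G w : Defs.proper G w <-> (forall a, 0 < w a) /\ proper_on G w.
Proof.
split=> [/andP[/forallP w_pos /forallP wG]|[w_pos wG]].
  by split=> // a b aG bG; move: (wG a) => /forallP/(_ b); rewrite aG bG.
apply/andP; split; apply/forallP => // a; apply/forallP => b.
by apply/implyP => /andP[]; apply: wG.
Qed.

Lemma edges_in_lsum c G1 G2 : edges_in G1 -> edges_in G2 -> edges_in (lsum c G1 G2).
Proof.
move=> G1e G2e a b e /=; rewrite !inE.
case: ifP => [/andP[-> ->] _|_]; first by rewrite orbT.
case e1: (edge G1 a b) => [e'|] e2; first by case/andP: (G1e a b e' e1) => -> ->.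
by case/andP: (G2e a b e e2) => -> ->; rewrite !orbT.
Qed.

Lemma proper_on_lsum c G1 G2 w :
  edges_in G1 -> edges_in G2 -> [disjoint verts G1 & verts G2] ->
  proper_on (lsum c G1 G2) w <->
  [/\ proper_on G1 w, proper_on G2 w &
      {in verts G1 & verts G2, forall a b, edge_ok (Some c) (w a) (w b)}].
Proof.
move=> G1e G2e G12; split=> [wG|[wG1 wG2 w12] a b].
  split=> a b aG bG; move: (wG a b); rewrite /= !inE aG bG ?orbT /= => /(_ isT isT).
  - by rewrite (disjointFr G12 bG); case: (edge G1 a b).
  - rewrite (disjointFl G12 aG) /=; case e1: (edge G1 a b) => [e|] //.
    by case/andP: (G1e a b e e1); rewrite (disjointFl G12 aG).
  - by [].
rewrite /= !inE; case: ifP => [/andP[aG bG] _ _|_ _ _]; first exact: w12.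
case e1: (edge G1 a b) => [e|].
  by case/andP: (G1e a b e e1) => aG bG; move: (wG1 a b aG bG); rewrite e1.
case e2: (edge G2 a b) => [e|] //.
by case/andP: (G2e a b e e2) => aG bG; move: (wG2 a b aG bG); rewrite e2.
Qed.

Lemma edges_in_Ccyc A : edges_in (Ccyc A).
Proof. by move=> a b e /=; case: ifP => // /and4P[-> ->]. Qed.

(* Along a cycle of double edges the colours weakly increase, so they are equal. *)
Lemma proper_on_Ccyc A w : proper_on (Ccyc A) w <-> constant_on w A.
Proof.
split=> [wA|/forall_inP wA a b /= aA bA]; last first.
  by case: ifP => //= _; move/forall_inP: (wA a aA) => /(_ b bA)/eqP ->.
apply/forall_inP => a aA; apply/forall_inP => b bA; apply/eqP.
apply: (cycle_next_leq_const (enum_uniq (mem A))); rewrite ?mem_enum //.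
move=> u; rewrite mem_enum => uA; case: (eqVneq u (next (enum A) u)) => [<- //|u_next].
have nextA : next (enum A) u \in A by rewrite -mem_enum mem_next mem_enum.
by move: (wA u _ uA nextA); rewrite /= uA nextA u_next eqxx.
Qed.

Lemma verts_cycle_sum c L : verts (cycle_sum c L) = covered L.
Proof.
elim: L => [|B L IH]; first by rewrite /covered big_nil.
by rewrite /covered big_cons -/(covered L) -IH.
Qed.

Lemma edges_in_cycle_sum c L : edges_in (cycle_sum c L).
Proof.
by elim: L => [//|B L IH]; apply: edges_in_lsum => //; apply: edges_in_Ccyc.
Qed.

Lemma proper_on_cycle_sum c L w : pairwise (fun B C => [disjoint B & C]) L ->
  proper_on (cycle_sum c L) w <-> all (constant_on w) L && pairwise (cross_ok c w) L.
Proof.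
elim: L => [|B L IH]; first by split=> // a b; rewrite /= inE.
rewrite pairwise_cons => /andP[BL L_disj].
have BL_disj : [disjoint verts (Ccyc B) & verts (cycle_sum c L)].
  rewrite verts_cycle_sum; apply/disjoint_memP => j jB.
  by rewrite mem_covered => /hasP[C CL jC]; move/disjoint_memP: (allP BL C CL) => /(_ j jB jC).
have E := proper_on_lsum c w (@edges_in_Ccyc B) (@edges_in_cycle_sum c L) BL_disj.
rewrite verts_cycle_sum in E; rewrite /=.
split=> [/E[/proper_on_Ccyc -> /(IH L_disj)/andP[-> ->] wBL]|].
  rewrite !andbT; apply/allP => C CL; apply/forall_inP => a aB.
  by apply/forall_inP => b bC; apply: wBL; rewrite // mem_covered; apply/hasP; exists C.
case/andP=> /andP[constB constL] /andP[BLok okL]; apply/E; split.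
- exact/proper_on_Ccyc.
- by apply/(IH L_disj); rewrite constL okL.
- move=> a b aB; rewrite mem_covered => /hasP[C CL bC].
  by move/forall_inP: (allP BLok C CL) => /(_ a aB)/forall_inP/(_ b bC).
Qed.

End Colourings.

Definition blocks n (x : rsc_t n) : seq {set 'I_n} := x.1 ++ enum x.2.

Lemma mem_blocks n (x : rsc_t n) B : (B \in blocks x) = (B \in x.1) || (B \in x.2).
Proof. by rewrite mem_cat mem_enum. Qed.

Lemma nth_blocks1 n (x : rsc_t n) l : l < size x.1 -> nth set0 (blocks x) l = nth set0 x.1 l.
Proof. by move=> lx; rewrite nth_cat lx. Qed.

Definition block_index n (x : rsc_t n) (j : 'I_n) : nat :=
  find (fun B : {set 'I_n} => j \in B) (blocks x).

Definition rsc_word n (x : rsc_t n) : word n := fun j => (block_index x j).+1.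

Lemma block_index_lt1 n (x : rsc_t n) j :
  (block_index x j < size x.1) = (j \in covered x.1).
Proof.
rewrite /block_index find_cat mem_covered; case: ifP => [|_]; first by rewrite -has_find.
by rewrite ltnNge leq_addr.
Qed.

Lemma McoefP n (y : rsc_t n) (w : word n) :
  Mcoef y w <-> [/\ forall j, 0 < w j, forall j k, (w j == w k) = sameblock y j k
                   & pairwise (cross_ok Solid w) y.1].
Proof.
split=> [/and3P[/forallP w_pos /forallP w_eq /forallP w_lt]|[w_pos w_eq w_lt]].
  split=> // [j k|]; first by move: (w_eq j) => /forallP/(_ k)/eqP.
  apply/(pairwiseP set0) => l m ly my lm.
  by move/forallP: (w_lt (Ordinal ly)) => /(_ (Ordinal my))/implyP/(_ lm).
apply/and3P; split; first exact/forallP.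
  by apply/forallP => j; apply/forallP => k; rewrite w_eq.
apply/forallP => l; apply/forallP => m; apply/implyP => lm.
exact: (pairwiseP set0 w_lt l m (ltn_ord l) (ltn_ord m) lm).
Qed.

Definition level n (w : word n) (v : nat) : {set 'I_n} := [set k | w k == v].

Section RscBlocks.
Variables (n r : nat) (x : rsc_t n).
Hypothesis x_rsc : is_rsc r x.
Implicit Types (B C : {set 'I_n}) (j k : 'I_n).

Lemma cover_rsc2 : cover x.2 = ~: covered x.1.
Proof. by case/and5P: x_rsc => _ _ _ /and3P[/eqP]. Qed.

Lemma rsc_block_neq0 B : B \in blocks x -> B != set0.
Proof.
case/and5P: x_rsc => x1_neq0 _ _ /and3P[_ _ x2_neq0] _.
rewrite mem_blocks => /orP[/(allP x1_neq0)//|Bx].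
by apply: contraNneq x2_neq0 => <-.
Qed.

Lemma rsc_blocks_disjoint B C :
  B \in blocks x -> C \in blocks x -> B != C -> [disjoint B & C].
Proof.
case/and5P: x_rsc => _ x1_disj _ /and3P[_ x2_triv _] _.
have x12_disj B' C' : B' \in x.1 -> C' \in x.2 -> [disjoint B' & C'].
  move=> B'x C'x; apply/disjoint_memP => j jB jC.
  have : j \in cover x.2 by apply/bigcupP; exists C'.
  by rewrite cover_rsc2 inE mem_covered => /hasPn/(_ _ B'x); rewrite jB.
rewrite !mem_blocks => /orP[Bx|Bx] /orP[Cx|Cx] BC.
- by apply: pairwise_sym_mem x1_disj _ _ BC => // ??; rewrite disjoint_sym.
- exact: x12_disj.
- by rewrite disjoint_sym; apply: x12_disj.
- exact: (trivIsetP x2_triv).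
Qed.

Lemma rsc_block_eq B C j :
  B \in blocks x -> C \in blocks x -> j \in B -> j \in C -> B = C.
Proof.
move=> Bx Cx jB jC; apply/eqP; apply: contraT => BC.
by move/disjoint_memP: (rsc_blocks_disjoint Bx Cx BC) => /(_ j jB jC).
Qed.

Lemma rsc_blocks_cover j : has (fun B => j \in B) (blocks x).
Proof.
rewrite has_cat; case: (boolP (j \in covered x.1)) => [|jx1].
  by rewrite mem_covered => ->.
have : j \in cover x.2 by rewrite cover_rsc2 inE.
by case/bigcupP => C Cx jC; apply/orP; right; apply/hasP; exists C; rewrite ?mem_enum.
Qed.

Lemma rsc_blocks_uniq : uniq (blocks x).
Proof.
have x1_nondisj B : B \in x.1 -> ~~ [disjoint B & B].
  move=> Bx; have /set0Pn[j jB] : B != set0 by rewrite rsc_block_neq0 // mem_blocks Bx.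
  by apply/negP => /disjoint_memP/(_ j jB jB).
rewrite cat_uniq enum_uniq andbT; apply/andP; split.
  apply: contraT => /(uniqPn set0)[i [k [ik kx ik_eq]]].
  case/and5P: x_rsc => _ /(pairwiseP set0)/(_ i k (ltn_trans ik kx) kx ik) + _ _ _.
  by rewrite ik_eq (negbTE (x1_nondisj _ (mem_nth set0 kx))).
apply/hasPn => B; rewrite mem_enum => Bx2; apply/negP => Bx1.
have /set0Pn[j jB] : B != set0 by rewrite rsc_block_neq0 // mem_blocks Bx1.
have : j \in cover x.2 by apply/bigcupP; exists B.
by rewrite cover_rsc2 inE mem_covered; apply/negP; rewrite negbK; apply/hasP; exists B.
Qed.

Lemma mem_rsc1 B : (B \in x.1) = (B \in blocks x) && (r <= #|B|).
Proof.
case/and5P: x_rsc => _ _ x1_big _ /forall_inP x2_small; rewrite mem_blocks.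
apply/idP/andP => [Bx1|[/orP[//|/x2_small] + rB]]; first by rewrite Bx1 (allP x1_big).
by rewrite ltnNge rB.
Qed.

Lemma mem_rsc2 B : (B \in x.2) = (B \in blocks x) && (#|B| < r).
Proof.
case/and5P: x_rsc => _ _ x1_big _ /forall_inP x2_small; rewrite mem_blocks.
apply/idP/andP => [Bx2|[/orP[/(allP x1_big) + |//] rB]]; first by rewrite Bx2 orbT x2_small.
by rewrite leqNgt rB.
Qed.

Lemma block_index_lt j : block_index x j < size (blocks x).
Proof. by rewrite -has_find rsc_blocks_cover. Qed.

Lemma mem_block_index j : j \in nth set0 (blocks x) (block_index x j).
Proof. exact: nth_find (rsc_blocks_cover j). Qed.

Lemma block_indexE j i :
  i < size (blocks x) -> j \in nth set0 (blocks x) i -> block_index x j = i.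
Proof.
move=> ix ji; apply/eqP; rewrite -(nth_uniq set0 (block_index_lt j) ix rsc_blocks_uniq).
by apply/eqP/(rsc_block_eq _ _ (mem_block_index j) ji); apply: mem_nth; rewrite ?block_index_lt.
Qed.

Lemma sameblockE j k : sameblock x j k = (block_index x j == block_index x k).
Proof.
apply/hasP/eqP => [[B Bx /andP[jB kB]]|jk].
  have Bi := nth_index set0 Bx; have iB : index B (blocks x) < size (blocks x) by rewrite index_mem.
  by rewrite !(block_indexE iB) ?Bi.
exists (nth set0 (blocks x) (block_index x j)); first by rewrite mem_nth ?block_index_lt.
by rewrite mem_block_index jk mem_block_index.
Qed.

Lemma block_index_nth1 j l :
  l < size x.1 -> j \in nth set0 x.1 l -> block_index x j = l.
Proof.
move=> lx jl; apply: block_indexE; last by rewrite nth_blocks1.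
by rewrite size_cat (leq_trans lx) ?leq_addr.
Qed.

Lemma block_index_enum2 j i :
  i < size (enum x.2) -> j \in nth set0 (enum x.2) i -> block_index x j = size x.1 + i.
Proof.
move=> ix ji; apply: block_indexE; first by rewrite size_cat ltn_add2l.
by rewrite nth_cat ltnNge leq_addr /= addKn.
Qed.

Lemma Mcoef_rsc_word : Mcoef x (rsc_word x).
Proof.
apply/McoefP; split=> // [j k|]; first by rewrite sameblockE eqSS.
apply/(pairwiseP set0) => l m lx mx lm; apply/forall_inP => j jl; apply/forall_inP => k km.
by rewrite /= /rsc_word ltnS (block_index_nth1 lx jl) (block_index_nth1 mx km).
Qed.

Lemma Mcoef_leq w j k : Mcoef x w -> j \in covered x.1 -> k \in covered x.1 ->
  (w j <= w k) = (block_index x j <= block_index x k).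
Proof.
case/McoefP => _ w_eq /(pairwiseP set0) w_lt; rewrite -!block_index_lt1 => jx kx.
have w_ltP (a b : 'I_n) : block_index x a < size x.1 -> block_index x b < size x.1 ->
    block_index x a < block_index x b -> w a < w b.
  move=> ax bx ab; have [aa bb] := (mem_block_index a, mem_block_index b).
  rewrite !nth_blocks1 // in aa bb.
  exact: (forall_inP (forall_inP (w_lt _ _ ax bx ab) a aa) b bb).
case: (ltngtP (block_index x j) (block_index x k)) => [jk|kj|jk].
- by rewrite (ltnW (w_ltP _ _ jx kx jk)).
- by rewrite leqNgt (w_ltP _ _ kx jx kj).
- by move: (w_eq j k); rewrite sameblockE jk eqxx => /eqP->; rewrite leqnn.
Qed.

Lemma Mcoef_level w B j : Mcoef x w -> B \in blocks x -> j \in B -> B = level w (w j).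
Proof.
case/McoefP => _ w_eq _ Bx jB; apply/setP => k; rewrite inE eq_sym w_eq.
apply/idP/hasP => [kB|[C Cx /andP[jC kC]]]; first by exists B; rewrite ?jB.
by rewrite (rsc_block_eq Bx Cx jB jC).
Qed.

Lemma mem_blocks_Mcoef w B : Mcoef x w -> (B \in blocks x) = [exists j, B == level w (w j)].
Proof.
move=> xw; apply/idP/existsP => [Bx|[j /eqP->]].
  by have /set0Pn[j jB] := rsc_block_neq0 Bx; exists j; rewrite (Mcoef_level xw Bx jB).
by case/hasP: (rsc_blocks_cover j) => C Cx jC; rewrite -(Mcoef_level xw Cx jC).
Qed.

End RscBlocks.

Lemma cross_ok_Solid_disjoint n (w : word n) B C : cross_ok Solid w B C -> [disjoint B & C].
Proof.
by move=> /forall_inP BC; apply/disjoint_memP => j jB /(forall_inP (BC j jB)); rewrite /= ltnn.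
Qed.

Section RscOfWord.
Variables (n r : nat) (w : word n).
Implicit Types (B C : {set 'I_n}) (j k : 'I_n).

Definition letters : seq nat := sort leq (undup (codom w)).

Definition rsc_of_word : rsc_t n :=
  ([seq B : {set 'I_n} <- [seq level w v | v <- letters] | r <= #|B|],
   [set B in [set level w (w j) | j : 'I_n] | #|B| < r]).

Lemma mem_level j : j \in level w (w j).
Proof. by rewrite inE. Qed.

Lemma levelE j v : j \in level w v -> level w v = level w (w j).
Proof. by rewrite inE => /eqP->. Qed.

Lemma mem_rsc_of_word1 B :
  (B \in rsc_of_word.1) = (r <= #|B|) && [exists j, B == level w (w j)].
Proof.
rewrite mem_filter; congr (_ && _); apply/mapP/existsP => [[v]|[j /eqP->]].
  by rewrite mem_sort mem_undup => /codomP[j ->] ->; exists j.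
by exists (w j); rewrite // mem_sort mem_undup codom_f.
Qed.

Lemma mem_rsc_of_word2 B :
  (B \in rsc_of_word.2) = (#|B| < r) && [exists j, B == level w (w j)].
Proof.
rewrite !inE andbC; congr (_ && _).
by apply/imsetP/existsP => [[j _ ->]|[j /eqP->]]; exists j.
Qed.

Lemma rsc_of_word1_lt : pairwise (cross_ok Solid w) rsc_of_word.1.
Proof.
apply/pairwise_filter; rewrite pairwise_map.
have : sorted ltn letters.
  by rewrite ltn_sorted_uniq_leq sort_uniq undup_uniq (sort_sorted leq_total).
rewrite sorted_pairwise; last exact: ltn_trans.
apply: sub_pairwise => u v uv; apply/forall_inP => a; rewrite inE => /eqP->.
by apply/forall_inP => b; rewrite inE => /eqP->.
Qed.

Lemma covered_rsc_of_word1 j : (j \in covered rsc_of_word.1) = (r <= #|level w (w j)|).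
Proof.
rewrite mem_covered; apply/hasP/idP => [[B] | big_j].
  rewrite mem_rsc_of_word1 => /andP[rB /existsP[i /eqP Bi]].
  by rewrite Bi in rB * => /levelE <-.
by exists (level w (w j)); rewrite ?mem_level // mem_rsc_of_word1 big_j; apply/existsP; exists j.
Qed.

Lemma cover_rsc_of_word2 j : (j \in cover rsc_of_word.2) = (#|level w (w j)| < r).
Proof.
apply/bigcupP/idP => [[B] | small_j].
  rewrite mem_rsc_of_word2 => /andP[Br /existsP[i /eqP Bi]].
  by rewrite Bi in Br * => /levelE <-.
by exists (level w (w j)); rewrite ?mem_level // mem_rsc_of_word2 small_j; apply/existsP; exists j.
Qed.

Lemma is_rsc_of_word : is_rsc r rsc_of_word.
Proof.
apply/and5P; split.
- apply/allP => B; rewrite mem_rsc_of_word1 => /andP[_ /existsP[j /eqP->]].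
  by apply/set0Pn; exists j; apply: mem_level.
- by apply: sub_pairwise rsc_of_word1_lt => B C; apply: cross_ok_Solid_disjoint.
- by apply/allP => B; rewrite mem_rsc_of_word1 => /andP[].
- apply/and3P; split.
  + apply/eqP/setP => j; rewrite inE cover_rsc_of_word2 covered_rsc_of_word1.
    by rewrite ltnNge.
  + apply/trivIsetP => B C; rewrite !mem_rsc_of_word2.
    move=> /andP[_ /existsP[i /eqP->]] /andP[_ /existsP[k /eqP->]] ik.
    apply/disjoint_memP => j /levelE ji /levelE jk.
    by rewrite ji jk eqxx in ik.
  + rewrite mem_rsc_of_word2; apply/negP => /andP[_ /existsP[j /eqP/setP/(_ j)]].
    by rewrite mem_level inE.
- by apply/forall_inP => B; rewrite mem_rsc_of_word2 => /andP[].
Qed.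

Lemma Mcoef_rsc_of_word : (forall j, 0 < w j) -> Mcoef rsc_of_word w.
Proof.
move=> w_pos; apply/McoefP; split=> // [j k|]; last exact: rsc_of_word1_lt.
apply/eqP/hasP => [wjk|[B]]; last first.
  rewrite mem_cat mem_enum mem_rsc_of_word1 mem_rsc_of_word2 -andb_orl.
  by case/andP=> _ /existsP[i /eqP->]; rewrite !inE => /andP[/eqP-> /eqP->].
exists (level w (w j)); last by rewrite !inE wjk !eqxx.
rewrite mem_cat mem_enum mem_rsc_of_word1 mem_rsc_of_word2 -andb_orl.
by rewrite leqNgt orNb; apply/existsP; exists j.
Qed.

End RscOfWord.

Lemma Mcoef_rsc_of_wordE n r (y : rsc_t n) (w : word n) :
  is_rsc r y -> Mcoef y w -> y = rsc_of_word r w.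
Proof.
move=> y_rsc yw; have [_ _ y1_lt] := (McoefP y w).1 yw.
have y1_neq0 B : B \in y.1 -> B != set0.
  by move=> By; rewrite (rsc_block_neq0 y_rsc) // mem_blocks By.
have y1E : y.1 = (rsc_of_word r w).1.
  apply: (irr_sorted_eq_in (leT := cross_ok Solid w)); rewrite ?pairwise_sorted ?rsc_of_word1_lt //.
  - move=> C B D /y1_neq0/set0Pn[k kC] _ _ /forall_inP BC /forall_inP CD.
    apply/forall_inP => a aB; apply/forall_inP => b bD.
    exact: ltn_trans (forall_inP (BC a aB) k kC) (forall_inP (CD k kC) b bD).
  - move=> B /y1_neq0/set0Pn[j jB]; apply/negP => /forall_inP/(_ j jB)/forall_inP/(_ j jB).
    by rewrite /= ltnn.
  - by move=> B; rewrite mem_rsc_of_word1 (mem_rsc1 y_rsc) (mem_blocks_Mcoef y_rsc _ yw) andbC.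
have y2E : y.2 = (rsc_of_word r w).2.
  by apply/setP => B; rewrite mem_rsc_of_word2 (mem_rsc2 y_rsc) (mem_blocks_Mcoef y_rsc _ yw) andbC.
by rewrite [y]surjective_pairing y1E y2E.
Qed.

Lemma covered_enum n (P : {set {set 'I_n}}) : covered (enum P) = cover P.
Proof. by rewrite /covered big_enum. Qed.

Section Fword.
Variables (n r : nat).
Implicit Types (x y : rsc_t n) (w : word n) (B C : {set 'I_n}) (j k : 'I_n).

Definition Fword x w : Prop :=
  [/\ forall j, 0 < w j, all (constant_on w) (blocks x), pairwise (cross_ok Double w) x.1,
      pairwise (cross_ok Dashed w) (enum x.2) & cross_ok Dashed w (covered x.1) (cover x.2)].

Lemma proper_FgraphP x w : is_rsc r x -> Defs.proper (Fgraph x) w <-> Fword x w.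
Proof.
move=> x_rsc; have x1_disj : pairwise (fun B C => [disjoint B & C]) x.1 by case/and5P: x_rsc.
have x2_disj : pairwise (fun B C => [disjoint B & C]) (enum x.2).
  apply/(pairwiseP set0) => i k ix kx ik; apply: (rsc_blocks_disjoint x_rsc).
  - by rewrite mem_cat mem_nth ?orbT.
  - by rewrite mem_cat mem_nth ?orbT.
  - by rewrite (nth_uniq set0 ix kx (enum_uniq _)) neq_ltn ik.
have x12_disj : [disjoint verts (cycle_sum Double x.1) & verts (cycle_sum Dashed (enum x.2))].
  by rewrite !verts_cycle_sum covered_enum (cover_rsc2 x_rsc) -setI_eq0 setICr.
have E := proper_on_lsum Dashed w
  (@edges_in_cycle_sum _ Double x.1) (@edges_in_cycle_sum _ Dashed (enum x.2)) x12_disj.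
rewrite !verts_cycle_sum covered_enum in E.
have E1 := proper_on_cycle_sum Double w x1_disj; have E2 := proper_on_cycle_sum Dashed w x2_disj.
split=> [/proper_graphE[w_pos /E[/E1/andP[c1 p1] /E2/andP[c2 p2] cross]]|[w_pos]].
  split=> //; first by rewrite all_cat c1.
  by apply/forall_inP => a a1; apply/forall_inP => b b2; apply: cross.
rewrite all_cat => /andP[c1 c2] p1 p2 /forall_inP cross; apply/proper_graphE; split=> //.
apply/E; split; [exact/E1/andP | exact/E2/andP | move=> a b a1 b2].
exact: (forall_inP (cross a a1)).
Qed.

Lemma Fword_Mcoef x w : is_rsc r x -> Mcoef x w -> Fword x w.
Proof.
move=> x_rsc /McoefP[w_pos w_eq x1_lt].
have w_neq a b : block_index x a != block_index x b -> w a != w b.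
  by rewrite w_eq (sameblockE x_rsc).
split=> //.
- apply/allP => B Bx; apply/forall_inP => a aB; apply/forall_inP => b bB.
  by rewrite w_eq; apply/hasP; exists B; rewrite ?aB.
- apply: sub_pairwise x1_lt => B C /forall_inP BC; apply/forall_inP => a /BC/forall_inP aC.
  by apply/forall_inP => b /aC; apply: ltnW.
- apply/(pairwiseP set0) => i k ix kx ik; apply/forall_inP => a ai; apply/forall_inP => b bk.
  rewrite /= w_neq // (block_index_enum2 x_rsc ix ai) (block_index_enum2 x_rsc kx bk).
  by rewrite eqn_add2l neq_ltn ik.
- apply/forall_inP => a ax1; apply/forall_inP => b; rewrite (cover_rsc2 x_rsc) inE => bx1.
  rewrite /= w_neq //; rewrite -!block_index_lt1 in ax1 bx1.
  by rewrite neq_ltn (leq_trans ax1) // leqNgt.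
Qed.

Lemma Fword_sameblock x w j k : Fword x w -> sameblock x j k -> w j = w k.
Proof.
case=> _ /allP w_const _ _ _ /hasP[B Bx /andP[jB kB]].
exact/eqP/(forall_inP (forall_inP (w_const B Bx) j jB) k kB).
Qed.

Definition block_pairs x : {set 'I_n * 'I_n} := [set p | sameblock x p.1 p.2].

(* [w] is constant on the blocks of [x], so each block of [y] is a union of blocks of
   [x]; equal numbers of pairs then force equal partitions. *)
Lemma Fword_Mcoef_coarser x y w : is_rsc r x -> is_rsc r y -> Fword x w -> Mcoef y w ->
  x = y \/ #|block_pairs x| < #|block_pairs y|.
Proof.
move=> x_rsc y_rsc xw yw; have [w_pos w_eq _] := (McoefP y w).1 yw.
have xy_sub : block_pairs x \subset block_pairs y.
  by apply/subsetP => -[j k]; rewrite !inE /= -w_eq => /(Fword_sameblock xw) ->.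
have [xy|xy] := eqVneq (block_pairs x) (block_pairs y); last first.
  by right; apply: proper_card; rewrite properEneq xy xy_sub.
have xy_same j k : sameblock x j k = sameblock y j k by move/setP: xy => /(_ (j, k)); rewrite !inE.
left; rewrite (Mcoef_rsc_of_wordE y_rsc yw); apply: (Mcoef_rsc_of_wordE x_rsc).
apply/McoefP; split=> // [j k|]; first by rewrite w_eq xy_same.
case: xw => _ _ x1_le _ _; apply/(pairwiseP set0) => l m lx mx lm.
apply/forall_inP => a al; apply/forall_inP => b bm.
move: (pairwiseP set0 x1_le l m lx mx lm) => /forall_inP/(_ a al)/forall_inP/(_ b bm) /=.
rewrite leq_eqVlt w_eq -xy_same (sameblockE x_rsc).
by rewrite (block_index_nth1 x_rsc lx al) (block_index_nth1 x_rsc mx bm) (ltn_eqF lm).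
Qed.

Lemma Fword_covered x y w B : is_rsc r x -> is_rsc r y -> Mcoef y w -> Fword x w ->
  B \in x.1 -> {subset B <= covered y.1}.
Proof.
move=> x_rsc y_rsc yw [_ /allP w_const _ _ _] Bx j jB.
have Dy : level w (w j) \in blocks y.
  by rewrite (mem_blocks_Mcoef y_rsc _ yw); apply/existsP; exists j.
have BD : B \subset level w (w j).
  apply/subsetP => k kB; rewrite inE eq_sym.
  by apply: (forall_inP (forall_inP (w_const B _) j jB) k kB); rewrite mem_blocks Bx.
have rB : r <= #|B| by move: Bx; rewrite (mem_rsc1 x_rsc) => /andP[].
rewrite mem_covered; apply/hasP; exists (level w (w j)); last exact: mem_level.
by rewrite (mem_rsc1 y_rsc) Dy (leq_trans rB (subset_leq_card BD)).
Qed.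

(* [Fword x w] only involves equalities between letters and, by [Fword_covered],
   comparisons of letters within the [Phi]-blocks of [y]; [Mcoef y] fixes both. *)
Lemma Fword_transfer x y w w' : is_rsc r x -> is_rsc r y -> Mcoef y w -> Mcoef y w' ->
  Fword x w -> Fword x w'.
Proof.
move=> x_rsc y_rsc yw yw' xw; have x1_cov := Fword_covered x_rsc y_rsc yw xw.
have [_ w_eq _] := (McoefP y w).1 yw; have [w'_pos w'_eq _] := (McoefP y w').1 yw'.
have ww' a b : (w a == w b) = (w' a == w' b) by rewrite w_eq w'_eq.
case: xw => _ w_const x1_le x2_neq x12_neq; split=> //.
- by apply/allP => B Bx; rewrite -(constant_on_eq _ ww') (allP w_const).
- apply: (sub_in_pairwise (P := mem x.1)) x1_le; last exact/allP.
  move=> B C Bx Cx /forall_inP BC; apply/forall_inP => a aB; apply/forall_inP => b bC /=.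
  have [a_cov b_cov] := (x1_cov B Bx a aB, x1_cov C Cx b bC).
  rewrite (Mcoef_leq y_rsc yw' a_cov b_cov) -(Mcoef_leq y_rsc yw a_cov b_cov).
  exact: (forall_inP (BC a aB)).
- by apply: sub_pairwise x2_neq => B C; rewrite (cross_ok_Dashed_eq _ _ ww').
- by rewrite -(cross_ok_Dashed_eq _ _ ww').
Qed.

End Fword.

Section Span.
Variables (n : nat) (f : rsc_t n -> ser n) (S : seq (rsc_t n)).
Local Open Scope ring_scope.

Definition spanned (g : ser n) : Prop := exists c, forall w, g w = lincomb f S c w.

Lemma lincomb_only s c x w : uniq s -> x \in s ->
  {in s, forall y, y != x -> c y * f y w = 0} -> lincomb f s c w = c x * f x w.
Proof.
move=> s_uniq xs others; rewrite /lincomb (bigD1_seq x) //= big_seq_cond big1 ?addr0 //.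
by move=> y /andP[]; apply: others.
Qed.

Lemma spanned_gen x : uniq S -> x \in S -> spanned (f x).
Proof.
move=> S_uniq xS; exists (fun y => (y == x)%:R) => w.
by rewrite (lincomb_only S_uniq xS) ?eqxx ?mul1r // => y _ /negbTE->; rewrite mul0r.
Qed.

Lemma spanned_add g1 g2 : spanned g1 -> spanned g2 -> spanned (fun w => g1 w + g2 w).
Proof.
move=> [c1 g1c] [c2 g2c]; exists (fun y => c1 y + c2 y) => w.
by rewrite g1c g2c /lincomb -big_split; apply: eq_bigr => y _; rewrite mulrDl.
Qed.

Lemma spanned_sum (s : seq (rsc_t n)) (d : rsc_t n -> rat) (F : rsc_t n -> ser n) :
  (forall y, y \in s -> d y != 0 -> spanned (F y)) ->
  spanned (fun w => \sum_(y <- s) d y * F y w).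
Proof.
elim: s => [|y s IH] Fs.
  by exists (fun=> 0) => w; rewrite big_nil /lincomb big1 // => z _; rewrite mul0r.
have [c' sc'] : spanned (fun w => \sum_(z <- s) d z * F z w).
  by apply: IH => z zs; apply: Fs; rewrite inE zs orbT.
have [c yc] : spanned (fun w => d y * F y w).
  have [->|dy] := eqVneq (d y) 0.
    by exists (fun=> 0) => w; rewrite mul0r /lincomb big1 // => z _; rewrite mul0r.
  have [c Fc] := Fs y (mem_head y s) dy; exists (fun z => d y * c z) => w.
  by rewrite Fc /lincomb mulr_sumr; apply: eq_bigr => z _; rewrite mulrA.
exists (fun z => c z + c' z) => w; rewrite big_cons yc sc' /lincomb -big_split.
by apply: eq_bigr => z _; rewrite mulrDl.
Qed.

End Span.

Section Unitriangular.
Local Open Scope ring_scope.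
Variables (n : nat) (P : pred (rsc_t n)) (f : rsc_t n -> ser n).
Variables (e : rsc_t n -> word n) (Q : rsc_t n -> nat).
Hypothesis f_diag : forall x, P x -> f x (e x) = 1.
Hypothesis f_triangular :
  forall x y, P x -> P y -> x != y -> f x (e y) != 0 -> (Q x < Q y)%N.

Lemma lincomb_unitriangular_free s c : uniq s -> all P s ->
  (forall w, lincomb f s c w = 0) -> forall x, x \in s -> c x = 0.
Proof.
move=> s_uniq /allP sP f0.
suff c0 k x : x \in s -> (Q x < k)%N -> c x = 0 by move=> x xs; apply: (c0 (Q x).+1).
elim: k x => // k IH x xs xk.
have := f0 (e x); rewrite (lincomb_only s_uniq xs) ?f_diag ?mulr1 ?sP // => y ys yx.
have [->|fy] := eqVneq (f y (e x)) 0; first by rewrite mulr0.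
by rewrite IH ?mul0r // (leq_trans (f_triangular (sP y ys) (sP x xs) yx fy)).
Qed.

Variables (S : seq (rsc_t n)) (g : rsc_t n -> ser n).
Hypotheses (S_uniq : uniq S) (S_P : all P S).
Hypothesis f_expand : forall x w, P x -> f x w = lincomb g S (fun y => f x (e y)) w.

Lemma spanned_unitriangular x : x \in S -> spanned f S (g x).
Proof.
pose N := (\max_(y <- S) Q y)%N.
suff IH k y : y \in S -> (N - Q y < k)%N -> spanned f S (g y).
  by move=> xS; apply: (IH (N - Q x).+1).
elim: k y => // k IH {}x xS xk.
pose d y := if y == x then 0 else - f x (e y).
have gx w : g x w = f x w + \sum_(y <- S) d y * g y w.
  rewrite (f_expand _ (allP S_P x xS)) /lincomb (bigD1_seq x) //= f_diag ?(allP S_P x xS) //.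
  rewrite mul1r -addrA big_mkcond -big_split /= big1 ?addr0 // => y _.
  by rewrite /d; case: eqVneq => _ /=; rewrite ?mul0r ?addr0 // mulNr addrN.
have [c fc] : spanned f S (fun w => f x w + \sum_(y <- S) d y * g y w).
  apply: spanned_add; first exact: spanned_gen.
  apply: spanned_sum => y yS; rewrite /d; have [->|yx] := eqVneq y x; first by rewrite eqxx.
  rewrite /= oppr_eq0 => fy; rewrite eq_sym in yx.
  have Qxy := f_triangular (allP S_P x xS) (allP S_P y yS) yx fy.
  apply: IH => //; have QyN : (Q y <= N)%N by apply: (leq_bigmax_seq _ yS).
  lia.
by exists c => w; rewrite gx fc.
Qed.

End Unitriangular.

Section Bases.
Local Open Scope ring_scope.
Variables (n r : nat).
Implicit Types (x y : rsc_t n) (w : word n).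

Lemma Mcoef_inj x y w : is_rsc r x -> is_rsc r y -> Mcoef x w -> Mcoef y w -> x = y.
Proof.
by move=> x_rsc y_rsc xw yw; rewrite (Mcoef_rsc_of_wordE x_rsc xw) (Mcoef_rsc_of_wordE y_rsc yw).
Qed.

Lemma lincomb_M s c x w : uniq s -> all (is_rsc r) s -> x \in s -> Mcoef x w ->
  lincomb (@M n) s c w = c x.
Proof.
move=> s_uniq /allP s_rsc xs xw; rewrite (lincomb_only s_uniq xs) => [|y ys yx].
  by rewrite /M xw mulr1.
rewrite /M; case: ifP => [yw|]; last by rewrite mulr0.
by rewrite (Mcoef_inj (s_rsc y ys) (s_rsc x xs) yw xw) eqxx in yx.
Qed.

Lemma M_rsc_word x y : is_rsc r x -> is_rsc r y -> M x (rsc_word y) = (x == y)%:R.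
Proof.
move=> x_rsc y_rsc; rewrite /M; case: ifP => [xw|xw]; case: eqVneq => [xy|xy] //.
- by rewrite (Mcoef_inj x_rsc y_rsc xw (Mcoef_rsc_word y_rsc)) eqxx in xy.
- by rewrite xy (Mcoef_rsc_word y_rsc) in xw.
Qed.

Lemma Fbar_transfer x y w w' : is_rsc r x -> is_rsc r y -> Mcoef y w -> Mcoef y w' ->
  Fbar x w = Fbar x w'.
Proof.
move=> x_rsc y_rsc yw yw'; rewrite /Fbar /Y; congr (if _ then _ else _).
apply/idP/idP => /(proper_FgraphP _ x_rsc) xw; apply/(proper_FgraphP _ x_rsc).
  exact: Fword_transfer y_rsc yw yw' xw.
exact: Fword_transfer y_rsc yw' yw xw.
Qed.

Lemma Fbar_rsc_word x : is_rsc r x -> Fbar x (rsc_word x) = 1.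
Proof.
move=> x_rsc; have := (proper_FgraphP _ x_rsc).2 (Fword_Mcoef x_rsc (Mcoef_rsc_word x_rsc)).
by rewrite /Fbar /Y => ->.
Qed.

Lemma Fbar_triangular x y : is_rsc r x -> is_rsc r y -> x != y -> Fbar x (rsc_word y) != 0 ->
  (#|block_pairs x| < #|block_pairs y|)%N.
Proof.
move=> x_rsc y_rsc xy; rewrite /Fbar /Y; case: ifP => [|_]; last by rewrite eqxx.
move=> /(proper_FgraphP _ x_rsc) xw _.
have [xyE|//] := Fword_Mcoef_coarser x_rsc y_rsc xw (Mcoef_rsc_word y_rsc).
by rewrite xyE eqxx in xy.
Qed.

Definition short_set_seqs : seq (seq {set 'I_n}) :=
  flatten [seq [seq tval t | t <- enum {: k.-tuple {set 'I_n}}] | k <- iota 0 #|{: {set 'I_n}}|.+1].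

Definition rsc_enum : seq (rsc_t n) :=
  undup [seq x <- [seq (s, P) | s <- short_set_seqs, P <- enum {: {set {set 'I_n}}}] | is_rsc r x].

Lemma mem_rsc_enum x : (x \in rsc_enum) = is_rsc r x.
Proof.
rewrite mem_undup mem_filter; case x_rsc: (is_rsc r x) => //=.
rewrite [x]surjective_pairing; apply: allpairs_f; last by rewrite mem_enum.
have x1_uniq : uniq x.1 by move: (rsc_blocks_uniq x_rsc); rewrite cat_uniq => /andP[].
apply/flatten_mapP; exists (size x.1); last by apply/mapP; exists (in_tuple x.1); rewrite ?mem_enum.
by rewrite mem_iota add0n ltnS -(card_uniqP x1_uniq) max_card.
Qed.

Lemma rsc_enum_uniq : uniq rsc_enum.
Proof. exact: undup_uniq. Qed.

Lemma all_rsc_enum : all (is_rsc r) rsc_enum.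
Proof. by apply/allP => x; rewrite mem_rsc_enum. Qed.

Lemma Fbar_expand x : is_rsc r x ->
  forall w, Fbar x w = lincomb (@M n) rsc_enum (fun y => Fbar x (rsc_word y)) w.
Proof.
move=> x_rsc w; have [/forallP w_pos|w_npos] := boolP [forall j, (0 < w j)%N].
  have y_rsc := is_rsc_of_word r w; have yw := Mcoef_rsc_of_word r w_pos.
  rewrite (lincomb_M _ rsc_enum_uniq all_rsc_enum _ yw) ?mem_rsc_enum //.
  exact: Fbar_transfer x_rsc y_rsc yw (Mcoef_rsc_word y_rsc).
rewrite /Fbar /Y /Defs.proper (negbTE w_npos) /lincomb big1 // => y _.
by rewrite /M /Mcoef (negbTE w_npos) mulr0.
Qed.

Lemma NCQSym_M x : is_rsc r x -> NCQSym r (M x).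
Proof.
move=> x_rsc; exists [:: x], (fun=> 1); rewrite /= x_rsc; split=> // w.
by rewrite /lincomb big_seq1 mul1r.
Qed.

Lemma NCQSym_Fbar x : is_rsc r x -> NCQSym r (Fbar x).
Proof.
move=> x_rsc; exists rsc_enum, (fun y => Fbar x (rsc_word y)).
by split; [exact: all_rsc_enum | exact: Fbar_expand x_rsc].
Qed.

Lemma NCQSym_Fbar_span g : NCQSym r g ->
  exists s c, all (is_rsc r) s /\ forall w, g w = lincomb (@Fbar n) s c w.
Proof.
case=> s [c [/allP s_rsc gM]]; suff [c' gF] : spanned (@Fbar n) rsc_enum g.
  by exists rsc_enum, c'; split; [exact: all_rsc_enum | exact: gF].
have [c' gF] : spanned (@Fbar n) rsc_enum (fun w => lincomb (@M n) s c w).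
  apply: spanned_sum => y ys _.
  apply: (spanned_unitriangular (P := is_rsc r) (e := @rsc_word n)
                                (Q := fun x => #|block_pairs x|)).
  - exact: Fbar_rsc_word.
  - exact: Fbar_triangular.
  - exact: rsc_enum_uniq.
  - exact: all_rsc_enum.
  - by move=> x w /Fbar_expand.
  - by rewrite mem_rsc_enum s_rsc.
by exists c' => w; rewrite gM gF.
Qed.

Lemma M_free s c : uniq s -> all (is_rsc r) s -> (forall w, lincomb (@M n) s c w = 0) ->
  forall x, x \in s -> c x = 0.
Proof.
apply: (lincomb_unitriangular_free (e := @rsc_word n) (Q := fun=> 0%N)).
  by move=> x x_rsc; rewrite M_rsc_word ?eqxx.
by move=> x y x_rsc y_rsc xy; rewrite M_rsc_word // (negbTE xy) eqxx.
Qed.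

Lemma Fbar_free s c : uniq s -> all (is_rsc r) s -> (forall w, lincomb (@Fbar n) s c w = 0) ->
  forall x, x \in s -> c x = 0.
Proof.
apply: (lincomb_unitriangular_free (e := @rsc_word n) (Q := fun x => #|block_pairs x|)).
  exact: Fbar_rsc_word.
exact: Fbar_triangular.
Qed.

End Bases.

Theorem mainTheorem4 (r n : nat) (hr : (0 < r)%N) :
  is_basis (@NCQSym n r) (@is_rsc n r) (@M n) /\
  is_basis (@NCQSym n r) (@is_rsc n r) (@Fbar n).
Proof.
split; split.
- exact: NCQSym_M.
- by [].
- exact: M_free.
- exact: NCQSym_Fbar.
- exact: NCQSym_Fbar_span.
- exact: Fbar_free.
Qed.
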